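(* Let $g\ge1$. Put $u_1=0$, and let $u_2,\dots,u_{2g+1}$ be pairwise distinct nonzero complex numbers varying in a small open set. Consider the hyperelliptic curve $v^2=u\prod_{i=2}^{2g+1}(u-u_i)$. Let $\{\gamma_k\}_{k=1}^{2g}$ be a basis of its first homology, represented by cycles avoiding the branch points and infinity and transported continuously as the $u_j$ vary. Let $\gamma=\sum_{k=1}^{2g}c_k\gamma_k$ with constants $c_k\in\mathbb{C}$. Define $$a_1=-\oint_\gamma\frac{du}{v},\qquad a_i=\oint_\gamma\frac{du}{v}+u_i\oint_\gamma\frac{du}{(u-u_i)v}\quad(2\le i\le 2g+1).$$ Set $\alpha_1=1/4$, $\alpha_i=-1/4$ for $2\le i\le 2g+1$, and $\alpha_\infty=(2g-1)/4$. Then for all $i\in\{1,\dots,2g+1\}$ and $j\in\{2,\dots,2g+1\}$ with $i\neq j$, $$\frac{\partial a_i}{\partial u_j}=\frac{2(\alpha_j a_i-\alpha_i a_j)}{u_j-u_i},$$ and moreover $\sum_{i=1}^{2g+1}a_i=0$. Explicitly, these relations read $$\frac{\partial a_1}{\partial u_j}=-\frac{a_1+a_j}{2u_j},\qquad \frac{\partial a_i}{\partial u_j}=\frac{a_j-a_i}{2(u_j-u_i)}\quad (i,j\ge2,\ i\ne j).$$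
   Context: These equations are the upper triangular reduction of the rank two Schlesinger system in which $u_1=0$ is fixed. The residue matrices are $A^{(i)}=\begin{pmatrix}\alpha_i & a_i\\ 0&-\alpha_i\end{pmatrix}$, and $A^{(\infty)}=\mathrm{diag}(\alpha_\infty,-\alpha_\infty)$. *)

From Stdlib Require Import Reals List Lra.
From Coquelicot Require Import Coquelicot.
Open Scope R_scope.

(* Parameters: p : nat -> C ; only the coordinates p 2, ..., p (2g+1) are used
   (these are u_2,...,u_{2g+1}); u_1 = 0 is built in. *)
Definition idx (g : nat) : list nat := seq 2 (2 * g).

Definition ub (p : nat -> C) (i : nat) : C := if Nat.eqb i 1 then 0%C else p i.

Definition hyp_poly (g : nat) (p : nat -> C) (z : C) : C :=
  (z * fold_right Cmult 1%C (map (fun k => (z - p k)%C) (idx g)))%C.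

Definition pdist (g : nat) (p q : nat -> C) : R :=
  fold_right Rmax 0 (map (fun k => Cmod (p k - q k)%C) (idx g)).

Definition par_open (g : nat) (U : (nat -> C) -> Prop) : Prop :=
  forall p, U p -> exists eps, 0 < eps /\ forall q, pdist g p q < eps -> U q.

Definition admissible (g : nat) (p : nat -> C) : Prop :=
  (forall k, (2 <= k <= 2 * g + 1)%nat -> p k <> 0%C) /\
  (forall k l, (2 <= k <= 2 * g + 1)%nat -> (2 <= l <= 2 * g + 1)%nat ->
      k <> l -> p k <> p l).

(* A cycle on the curve over the parameter set U:
   gam : a C^1 closed loop in the u-plane (parametrised by [0,1], with derivative dgam)
   avoiding all branch points u_1=0,...,u_{2g+1} for every parameter in U, and
   w p t : a choice of v over gam t, i.e. w p t ^2 = hyp_poly g p (gam t), closing up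
   (w p 0 = w p 1) and depending continuously on (p,t) (transport of the cycle). *)
Definition lifted_cycle (g : nat) (U : (nat -> C) -> Prop)
    (gam dgam : R -> C) (w : (nat -> C) -> R -> C) : Prop :=
  (forall t, @is_derive R_AbsRing C_R_NormedModule gam t (dgam t)) /\
  (forall t, 0 <= t <= 1 -> forall eps, 0 < eps -> exists delta, 0 < delta /\
      forall s, 0 <= s <= 1 -> Rabs (s - t) < delta -> Cmod (dgam s - dgam t)%C < eps) /\
  gam 0 = gam 1 /\
  (forall p t, U p -> 0 <= t <= 1 ->
      forall i, (1 <= i <= 2 * g + 1)%nat -> gam t <> ub p i) /\
  (forall p t, U p -> 0 <= t <= 1 -> (w p t * w p t)%C = hyp_poly g p (gam t)) /\
  (forall p, U p -> w p 0 = w p 1) /\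
  (forall p t, U p -> 0 <= t <= 1 -> forall eps, 0 < eps -> exists delta, 0 < delta /\
      forall q s, U q -> 0 <= s <= 1 -> pdist g p q < delta -> Rabs (s - t) < delta ->
        Cmod (w q s - w p t)%C < eps).

Definition cyc_int (gam dgam : R -> C) (w : (nat -> C) -> R -> C)
    (F : C -> C) (p : nat -> C) : C :=
  @RInt C_R_CompleteNormedModule
    (fun t => (F (gam t) * dgam t / w p t)%C) 0 1.

Definition per (g : nat) (c : nat -> C) (gam dgam : nat -> R -> C)
    (w : nat -> (nat -> C) -> R -> C) (F : C -> C) (p : nat -> C) : C :=
  fold_right Cplus 0%C
    (map (fun k => (c k * cyc_int (gam k) (dgam k) (w k) F p)%C) (seq 0 (2 * g))).

Definition acoef (g : nat) (c : nat -> C) (gam dgam : nat -> R -> C)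
    (w : nat -> (nat -> C) -> R -> C) (i : nat) (p : nat -> C) : C :=
  if Nat.eqb i 1 then (- per g c gam dgam w (fun _ => 1%C) p)%C
  else (per g c gam dgam w (fun _ => 1%C) p
        + p i * per g c gam dgam w (fun z => / (z - p i))%C p)%C.

Definition alpha (i : nat) : C := if Nat.eqb i 1 then RtoC (1/4) else RtoC (-1/4).
Definition alpha_inf (g : nat) : C := RtoC ((2 * INR g - 1) / 4).

Definition shift (p : nat -> C) (j : nat) (h : C) : nat -> C :=
  fun k => if Nat.eqb k j then (p k + h)%C else p k.

(** Each [a_i] is a combination of periods [oint F(u) du / v] with [F = 1] or
    [F = 1 / (u - u_i)]. Because [v^2] has the simple factor [u - u_j], differentiating
    under the integral sign gives
    [d/du_j oint F du / v = 1/2 oint F du / ((u - u_j) v)], and partial fractions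
    [1 / ((u - u_i) (u - u_j)) = (1 / (u - u_i) - 1 / (u - u_j)) / (u_i - u_j)] turn this
    into the stated linear relations. The integrand of [a_1 + ... + a_(2g+1)] is
    [-2 d(u / v)], an exact form, so the sum vanishes on every closed cycle.

    On a cycle the branch [v] is only known to be continuous; its derivative along the
    loop comes from [v^2] (a continuous square root is differentiable where it does not
    vanish), and differentiation in [u_j] uses that the transported branch depends
    uniformly on the parameters. *)

From Stdlib Require Import Reals List Lra Lia ClassicalEpsilon Classical FunctionalExtensionality.
From Coquelicot Require Import Coquelicot.
Open Scope R_scope.

Lemma norm_C_R (z : C) : @norm _ C_R_NormedModule z = Cmod z.
Proof.
  destruct z as [x y]; unfold norm; simpl; unfold prod_norm, Cmod; simpl.
  f_equal; unfold norm; simpl; unfold abs; simpl.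
  replace (Rabs x * (Rabs x * 1)) with (Rabs x * Rabs x) by ring.
  replace (Rabs y * (Rabs y * 1)) with (Rabs y * Rabs y) by ring.
  rewrite <- !Rabs_mult, !Rabs_right; try (apply Rle_ge, Rle_0_sqr); ring.
Qed.

Lemma scal_C_R (r : R) (z : C) : @scal _ C_R_NormedModule r z = (RtoC r * z)%C.
Proof.
  destruct z as [x y]; unfold scal; simpl; unfold prod_scal, Cmult, RtoC; simpl.
  unfold scal; simpl; unfold mult; simpl; f_equal; ring.
Qed.

Lemma Cmod_minus_sym (a b : C) : Cmod (a - b) = Cmod (b - a).
Proof. replace (a - b)%C with (- (b - a))%C by ring; apply Cmod_opp. Qed.

Lemma Cmod_triangle_rev (a b : C) : Cmod a - Cmod b <= Cmod (a - b).
Proof.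
  pose proof (Cmod_triangle (a - b) b) as H.
  replace (a - b + b)%C with a in H by ring; lra.
Qed.

Lemma Cmod_R_nonneg (r : R) : 0 <= r -> Cmod r = r.
Proof. intros; rewrite Cmod_R; apply Rabs_pos_eq; auto. Qed.

Lemma Cminus_neq_0 (a b : C) : a <> b -> (a - b)%C <> 0%C.
Proof. intros Hab E; apply Hab; replace a with ((a - b) + b)%C by ring; rewrite E; ring. Qed.

Lemma ball_C_R (z y : C) (e : R) : Cmod (y - z) < e -> @ball C_R_NormedModule z e y.
Proof.
  intros H; destruct z as [a b], y as [c d].
  pose proof (re_le_Cmod ((c, d) - (a, b))%C) as Hre.
  pose proof (Rmax_Cmod ((c, d) - (a, b))%C) as Hmax.
  pose proof (Rmax_r (Rabs (c - a)) (Rabs (d - b))).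
  simpl in *; split; simpl; unfold ball; simpl; unfold AbsRing_ball, abs, minus, plus, opp;
    simpl; unfold Rminus in *; lra.
Qed.

Definition Ccont_within (D : R -> Prop) (f : R -> C) (t : R) : Prop :=
  forall eps, 0 < eps -> exists d, 0 < d /\
    forall s, D s -> Rabs (s - t) < d -> Cmod (f s - f t) < eps.

Definition Ccont_at (f : R -> C) (t : R) : Prop := Ccont_within (fun _ => True) f t.

Lemma Ccont_at_within D f t : Ccont_at f t -> Ccont_within D f t.
Proof.
  intros H eps He; destruct (H eps He) as [d [Hd H1]]; exists d; split; [exact Hd|].
  intros s _ Hs; exact (H1 s I Hs).
Qed.

Section ContinuityWithin.
Variable D : R -> Prop.

Lemma Ccont_within_const (c : C) t : Ccont_within D (fun _ => c) t.
Proof.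
  intros eps He; exists 1; split; [lra|]; intros s _ _.
  replace (c - c)%C with (RtoC 0) by ring; rewrite Cmod_0; lra.
Qed.

Lemma Ccont_within_ext f g t :
  (forall s, f s = g s) -> Ccont_within D f t -> Ccont_within D g t.
Proof.
  intros E Hf eps He; destruct (Hf eps He) as [d [Hd H]]; exists d; split; auto.
  intros s Hs Hst; rewrite <- !E; auto.
Qed.

Lemma Ccont_within_plus f g t :
  Ccont_within D f t -> Ccont_within D g t -> Ccont_within D (fun s => f s + g s)%C t.
Proof.
  intros Hf Hg eps He.
  destruct (Hf (eps / 2)) as [d1 [Hd1 H1]]; [lra|].
  destruct (Hg (eps / 2)) as [d2 [Hd2 H2]]; [lra|].
  exists (Rmin d1 d2); split; [apply Rmin_pos; lra|]; intros s Hs Hst.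
  pose proof (Rmin_l d1 d2); pose proof (Rmin_r d1 d2).
  specialize (H1 s Hs ltac:(lra)); specialize (H2 s Hs ltac:(lra)).
  replace (f s + g s - (f t + g t))%C with ((f s - f t) + (g s - g t))%C by ring.
  eapply Rle_lt_trans; [apply Cmod_triangle|]; lra.
Qed.

Lemma Ccont_within_mult f g t :
  Ccont_within D f t -> Ccont_within D g t -> Ccont_within D (fun s => f s * g s)%C t.
Proof.
  intros Hf Hg eps He.
  set (A := Cmod (f t) + 1); set (B := Cmod (g t) + 1).
  assert (HA : 1 <= A) by (pose proof (Cmod_ge_0 (f t)); unfold A; lra).
  assert (HB : 1 <= B) by (pose proof (Cmod_ge_0 (g t)); unfold B; lra).
  destruct (Hf (Rmin 1 (eps / (2 * B)))) as [d1 [Hd1 H1]].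
  { apply Rmin_pos; [lra|]; apply Rdiv_lt_0_compat; lra. }
  destruct (Hg (eps / (2 * A))) as [d2 [Hd2 H2]]; [apply Rdiv_lt_0_compat; lra|].
  exists (Rmin d1 d2); split; [apply Rmin_pos; lra|]; intros s Hs Hst.
  pose proof (Rmin_l d1 d2); pose proof (Rmin_r d1 d2).
  specialize (H1 s Hs ltac:(lra)); specialize (H2 s Hs ltac:(lra)).
  pose proof (Rmin_l 1 (eps / (2 * B))); pose proof (Rmin_r 1 (eps / (2 * B))).
  replace (f s * g s - f t * g t)%C with (f s * (g s - g t) + (f s - f t) * g t)%C by ring.
  eapply Rle_lt_trans; [apply Cmod_triangle|]; rewrite !Cmod_mult.
  assert (Hfs : Cmod (f s) <= A) by (pose proof (Cmod_triangle_rev (f s) (f t)); unfold A; lra).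
  assert (T1 : Cmod (f s) * Cmod (g s - g t) <= A * (eps / (2 * A))).
  { apply Rmult_le_compat; try apply Cmod_ge_0; lra. }
  assert (T2 : Cmod (f s - f t) * Cmod (g t) < eps / (2 * B) * B).
  { apply Rle_lt_trans with (Cmod (f s - f t) * B).
    - apply Rmult_le_compat_l; [apply Cmod_ge_0|unfold B; lra].
    - apply Rmult_lt_compat_r; lra. }
  replace (A * (eps / (2 * A))) with (eps / 2) in T1 by (field; lra).
  replace (eps / (2 * B) * B) with (eps / 2) in T2 by (field; lra).
  lra.
Qed.

Lemma Ccont_within_minus f g t :
  Ccont_within D f t -> Ccont_within D g t -> Ccont_within D (fun s => f s - g s)%C t.
Proof.
  intros Hf Hg; apply (Ccont_within_ext (fun s => f s + (-1) * g s)%C); [intros; ring|].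
  apply Ccont_within_plus, Ccont_within_mult; auto using Ccont_within_const.
Qed.

Lemma Ccont_within_inv f t :
  Ccont_within D f t -> f t <> 0%C -> Ccont_within D (fun s => / f s)%C t.
Proof.
  intros Hf Hnz eps He.
  set (A := Cmod (f t)); assert (HA : 0 < A) by (apply Cmod_gt_0; auto).
  destruct (Hf (Rmin (A / 2) (eps * A * A / 2))) as [d [Hd H]].
  { apply Rmin_pos; [lra|]; apply Rdiv_lt_0_compat; [|lra]; repeat apply Rmult_lt_0_compat; lra. }
  exists d; split; auto; intros s Hs Hst; specialize (H s Hs Hst).
  pose proof (Rmin_l (A / 2) (eps * A * A / 2)); pose proof (Rmin_r (A / 2) (eps * A * A / 2)).
  assert (Hfs : A / 2 <= Cmod (f s)).
  { pose proof (Cmod_triangle_rev (f t) (f s)); rewrite Cmod_minus_sym in H; unfold A in *; lra. }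
  assert (Hfs0 : f s <> 0%C) by (intro Z; rewrite Z, Cmod_0 in Hfs; lra).
  replace (/ f s - / f t)%C with ((f t - f s) / (f s * f t))%C by (field; auto).
  rewrite Cmod_div, Cmod_mult, Cmod_minus_sym by (apply Cmult_neq_0; auto); fold A.
  apply Rlt_le_trans with (eps * A * A / 2 / (A / 2 * A)).
  - unfold Rdiv; apply Rlt_le_trans with (eps * A * A / 2 * / (Cmod (f s) * A)).
    + apply Rmult_lt_compat_r; [|lra].
      apply Rinv_0_lt_compat, Rmult_lt_0_compat; lra.
    + apply Rmult_le_compat_l; [|apply Rinv_le_contravar; nra].
      apply Rlt_le, Rdiv_lt_0_compat; [repeat apply Rmult_lt_0_compat|]; lra.
  - right; field; lra.
Qed.

End ContinuityWithin.

Definition unit_interval (s : R) : Prop := 0 <= s <= 1.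

Definition cont01 (f : R -> C) : Prop :=
  forall t, 0 <= t <= 1 -> Ccont_within unit_interval f t.

Lemma cont01_const (c : C) : cont01 (fun _ => c).
Proof. intros t _; apply Ccont_within_const. Qed.

Lemma cont01_plus f g : cont01 f -> cont01 g -> cont01 (fun t => f t + g t)%C.
Proof. intros Hf Hg t Ht; apply Ccont_within_plus; auto. Qed.

Lemma cont01_minus f g : cont01 f -> cont01 g -> cont01 (fun t => f t - g t)%C.
Proof. intros Hf Hg t Ht; apply Ccont_within_minus; auto. Qed.

Lemma cont01_mult f g : cont01 f -> cont01 g -> cont01 (fun t => f t * g t)%C.
Proof. intros Hf Hg t Ht; apply Ccont_within_mult; auto. Qed.

Lemma cont01_inv f :
  cont01 f -> (forall t, 0 <= t <= 1 -> f t <> 0%C) -> cont01 (fun t => / f t)%C.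
Proof. intros Hf Hnz t Ht; apply Ccont_within_inv; auto. Qed.

Lemma Ccont_at_continuous f x : Ccont_at f x -> @continuous R_UniformSpace C_R_NormedModule f x.
Proof.
  intros H; apply filterlim_locally; intros [eps He]; simpl.
  destruct (H eps He) as [d [Hd H1]]; exists (mkposreal d Hd); intros s Hs.
  apply ball_C_R, H1; [exact I|exact Hs].
Qed.

Lemma cont01_interior f x : cont01 f -> 0 < x < 1 -> Ccont_at f x.
Proof.
  intros Hf Hx eps He; destruct (Hf x ltac:(lra) eps He) as [d [Hd H]].
  exists (Rmin d (Rmin x (1 - x))); split; [repeat apply Rmin_pos; lra|]; intros s _ Hs.
  pose proof (Rmin_l d (Rmin x (1 - x))); pose proof (Rmin_r d (Rmin x (1 - x))).
  pose proof (Rmin_l x (1 - x)); pose proof (Rmin_r x (1 - x)).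
  apply H; [|lra]; red; unfold Rabs in Hs; destruct Rcase_abs in Hs; lra.
Qed.

Definition clamp (x : R) : R := Rmax 0 (Rmin 1 x).

Lemma clamp_in x : 0 <= clamp x <= 1.
Proof. unfold clamp; split; [apply Rmax_l|apply Rmax_lub; [lra|apply Rmin_l]]. Qed.

Lemma clamp_id x : 0 <= x <= 1 -> clamp x = x.
Proof. intros; unfold clamp; rewrite Rmin_right by lra; rewrite Rmax_right; lra. Qed.

Lemma clamp_lipschitz x y : Rabs (clamp x - clamp y) <= Rabs (x - y).
Proof.
  unfold clamp, Rmax, Rmin; repeat destruct Rle_dec; unfold Rabs; repeat destruct Rcase_abs; lra.
Qed.

Lemma cont01_clamp f x : cont01 f -> Ccont_at (fun t => f (clamp t)) x.
Proof.
  intros Hf eps He; destruct (Hf (clamp x) (clamp_in x) eps He) as [d [Hd H]].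
  exists d; split; auto; intros s _ Hs; apply H; [apply clamp_in|].
  pose proof (clamp_lipschitz s x); lra.
Qed.

Lemma cont01_bound f : cont01 f -> exists B, 0 < B /\ forall t, 0 <= t <= 1 -> Cmod (f t) <= B.
Proof.
  intros Hf.
  destruct (continuity_ab_maj (fun t => Cmod (f (clamp t))) 0 1) as [M [HM _]]; [lra| |].
  { intros x _ eps He; destruct (cont01_clamp f x Hf eps He) as [d [Hd H]].
    exists d; split; auto; intros s [_ Hs]; simpl in *; unfold R_dist in *.
    specialize (H s I Hs).
    pose proof (Cmod_triangle_rev (f (clamp s)) (f (clamp x))).
    pose proof (Cmod_triangle_rev (f (clamp x)) (f (clamp s))).
    rewrite Cmod_minus_sym in H1; apply Rabs_def1; lra. }
  exists (Cmod (f (clamp M)) + 1); split; [pose proof (Cmod_ge_0 (f (clamp M))); lra|].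
  intros t Ht; specialize (HM t Ht); simpl in HM; rewrite clamp_id in HM by auto; lra.
Qed.

Lemma cont01_lbound f : cont01 f -> (forall t, 0 <= t <= 1 -> f t <> 0%C) ->
  exists m, 0 < m /\ forall t, 0 <= t <= 1 -> m <= Cmod (f t).
Proof.
  intros Hf Hnz; destruct (cont01_bound _ (cont01_inv f Hf Hnz)) as [B [HB H]].
  exists (/ B); split; [apply Rinv_0_lt_compat; auto|]; intros t Ht.
  specialize (H t Ht); rewrite Cmod_inv in H by auto.
  assert (Hft : 0 < Cmod (f t)) by (apply Cmod_gt_0; auto).
  replace (Cmod (f t)) with (/ / Cmod (f t)) by (field; lra).
  apply Rinv_le_contravar; auto; apply Rinv_0_lt_compat; auto.
Qed.

Lemma ex_RInt_cont01 f a b :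
  0 <= a -> a <= b -> b <= 1 -> cont01 f -> @ex_RInt C_R_NormedModule f a b.
Proof.
  intros Ha Hab Hb Hf; apply (ex_RInt_ext (fun t => f (clamp t))).
  { intros x Hx; rewrite Rmin_left, Rmax_right in Hx by lra; rewrite clamp_id; [reflexivity|lra]. }
  apply (@ex_RInt_continuous C_R_CompleteNormedModule); intros z _.
  apply Ccont_at_continuous, cont01_clamp, Hf.
Qed.

Lemma ex_RInt01 f : cont01 f -> @ex_RInt C_R_NormedModule f 0 1.
Proof. apply ex_RInt_cont01; lra. Qed.

Lemma is_RInt_Cmult (f : R -> C) a b (l c : C) :
  @is_RInt C_R_NormedModule f a b l ->
  @is_RInt C_R_NormedModule (fun t => c * f t)%C a b (c * l)%C.
Proof.
  intros H; destruct c as [c1 c2], l as [l1 l2].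
  pose proof (@is_RInt_fct_extend_fst R_NormedModule R_NormedModule f a b (l1, l2) H) as H1.
  pose proof (@is_RInt_fct_extend_snd R_NormedModule R_NormedModule f a b (l1, l2) H) as H2.
  simpl in H1, H2.
  apply (@is_RInt_fct_extend_pair R_NormedModule R_NormedModule (fun t => (c1, c2) * f t)%C a b).
  - eapply is_RInt_ext;
      [|apply (is_RInt_minus _ _ _ _ _ _ (is_RInt_scal _ _ _ c1 _ H1)
                                          (is_RInt_scal _ _ _ c2 _ H2))].
    intros x _; unfold minus, plus, opp, scal; simpl; unfold mult; simpl.
    destruct (f x); simpl; ring.
  - eapply is_RInt_ext;
      [|apply (is_RInt_plus _ _ _ _ _ _ (is_RInt_scal _ _ _ c1 _ H2)
                                         (is_RInt_scal _ _ _ c2 _ H1))].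
    intros x _; unfold minus, plus, opp, scal; simpl; unfold mult; simpl.
    destruct (f x); simpl; ring.
Qed.

Lemma ex_RInt_Cmult (f : R -> C) a b (c : C) : @ex_RInt C_R_NormedModule f a b ->
  @ex_RInt C_R_NormedModule (fun t => c * f t)%C a b.
Proof. intros [l H]; eexists; apply is_RInt_Cmult; eauto. Qed.

Lemma RInt_Cmult (f : R -> C) a b (c : C) : @ex_RInt C_R_NormedModule f a b ->
  @RInt C_R_CompleteNormedModule (fun t => c * f t)%C a b =
  (c * @RInt C_R_CompleteNormedModule f a b)%C.
Proof.
  intros [l H]; apply is_RInt_unique, is_RInt_Cmult.
  rewrite (@is_RInt_unique C_R_CompleteNormedModule _ _ _ _ H); auto.
Qed.

Lemma RInt_Cplus (f g : R -> C) a b :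
  @ex_RInt C_R_NormedModule f a b -> @ex_RInt C_R_NormedModule g a b ->
  @RInt C_R_CompleteNormedModule (fun t => f t + g t)%C a b =
  (@RInt C_R_CompleteNormedModule f a b + @RInt C_R_CompleteNormedModule g a b)%C.
Proof. apply (@RInt_plus C_R_CompleteNormedModule). Qed.

Lemma RInt_Cminus (f g : R -> C) a b :
  @ex_RInt C_R_NormedModule f a b -> @ex_RInt C_R_NormedModule g a b ->
  @RInt C_R_CompleteNormedModule (fun t => f t - g t)%C a b =
  (@RInt C_R_CompleteNormedModule f a b - @RInt C_R_CompleteNormedModule g a b)%C.
Proof. apply (@RInt_minus C_R_CompleteNormedModule). Qed.

Lemma Cmod_RInt_le (f : R -> C) a b B : a <= b -> @ex_RInt C_R_NormedModule f a b ->
  (forall t, a <= t <= b -> Cmod (f t) <= B) ->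
  Cmod (@RInt C_R_CompleteNormedModule f a b) <= B * (b - a).
Proof.
  intros Hab Hf HB; rewrite <- norm_C_R.
  replace (B * (b - a)) with (scal (b - a) B) by (unfold scal; simpl; unfold mult; simpl; ring).
  apply (@norm_RInt_le C_R_NormedModule f (fun _ => B) a b); auto.
  - intros t Ht; rewrite norm_C_R; auto.
  - apply (@RInt_correct C_R_CompleteNormedModule); auto.
  - apply (@is_RInt_const R_NormedModule).
Qed.

Lemma RInt_ext_le (f g : R -> C) a b : a <= b -> (forall t, a <= t <= b -> f t = g t) ->
  @RInt C_R_CompleteNormedModule f a b = @RInt C_R_CompleteNormedModule g a b.
Proof.
  intros Hab H; apply RInt_ext; intros x Hx.
  rewrite Rmin_left, Rmax_right in Hx by lra; apply H; lra.
Qed.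

Definition has_deriv (f : R -> C) (x : R) (l : C) : Prop :=
  forall eps, 0 < eps -> exists d, 0 < d /\ forall s, Rabs (s - x) < d ->
    Cmod (f s - f x - RtoC (s - x) * l) <= eps * Rabs (s - x).

Lemma has_deriv_is_derive f x l :
  has_deriv f x l -> @is_derive R_AbsRing C_R_NormedModule f x l.
Proof.
  intros H; split; [apply is_linear_scal_l|].
  intros y Hy; apply (@is_filter_lim_locally_unique R_AbsRing R_NormedModule) in Hy; subst y.
  intros [eps He]; destruct (H eps He) as [d [Hd H1]]; exists (mkposreal d Hd).
  intros y Hy; simpl in *; rewrite norm_C_R, scal_C_R.
  unfold ball in Hy; simpl in Hy; unfold AbsRing_ball in Hy; unfold norm; simpl.
  unfold abs, minus, plus, opp in *; simpl in *; exact (H1 y Hy).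
Qed.

Lemma is_derive_has_deriv f x l :
  @is_derive R_AbsRing C_R_NormedModule f x l -> has_deriv f x l.
Proof.
  intros [_ H] eps He; specialize (H x (fun P HP => HP) (mkposreal eps He)).
  destruct H as [[d Hd] H1]; exists d; split; auto; intros s Hs.
  specialize (H1 s Hs); simpl in H1; rewrite norm_C_R, scal_C_R in H1; exact H1.
Qed.

Lemma has_deriv_eq f x l l' : has_deriv f x l -> l = l' -> has_deriv f x l'.
Proof. intros H E; subst; auto. Qed.

Lemma has_deriv_ext f g x l : (forall s, f s = g s) -> has_deriv f x l -> has_deriv g x l.
Proof.
  intros E H eps He; destruct (H eps He) as [d [Hd H1]]; exists d; split; auto.
  intros s Hs; rewrite <- !E; auto.
Qed.

Lemma has_deriv_continuous f x l : has_deriv f x l -> Ccont_at f x.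
Proof.
  intros H eps He; destruct (H 1 Rlt_0_1) as [d [Hd H1]].
  set (L := Cmod l + 1); assert (HL : 1 <= L) by (pose proof (Cmod_ge_0 l); unfold L; lra).
  exists (Rmin d (eps / (2 * L))); split; [apply Rmin_pos; [|apply Rdiv_lt_0_compat]; lra|].
  intros s _ Hs; pose proof (Rmin_l d (eps / (2 * L))); pose proof (Rmin_r d (eps / (2 * L))).
  specialize (H1 s ltac:(lra)).
  pose proof (Cmod_triangle (f s - f x - RtoC (s - x) * l) (RtoC (s - x) * l)) as T.
  replace (f s - f x - RtoC (s - x) * l + RtoC (s - x) * l)%C with (f s - f x)%C in T by ring.
  rewrite Cmod_mult, Cmod_R in T.
  assert (Hr : Rabs (s - x) * L < eps / (2 * L) * L) by (apply Rmult_lt_compat_r; lra).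
  replace (eps / (2 * L) * L) with (eps / 2) in Hr by (field; lra).
  unfold L in Hr; pose proof (Rabs_pos (s - x)); nra.
Qed.

Lemma has_deriv_const (c : C) x : has_deriv (fun _ => c) x 0%C.
Proof.
  intros eps He; exists 1; split; [lra|]; intros s _.
  replace (c - c - RtoC (s - x) * 0)%C with (RtoC 0) by ring; rewrite Cmod_0.
  pose proof (Rabs_pos (s - x)); nra.
Qed.

Lemma has_deriv_plus f g x lf lg :
  has_deriv f x lf -> has_deriv g x lg -> has_deriv (fun t => f t + g t)%C x (lf + lg)%C.
Proof.
  intros Hf Hg eps He.
  destruct (Hf (eps / 2)) as [d1 [Hd1 H1]]; [lra|].
  destruct (Hg (eps / 2)) as [d2 [Hd2 H2]]; [lra|].
  exists (Rmin d1 d2); split; [apply Rmin_pos; lra|]; intros s Hs.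
  pose proof (Rmin_l d1 d2); pose proof (Rmin_r d1 d2).
  specialize (H1 s ltac:(lra)); specialize (H2 s ltac:(lra)).
  replace (f s + g s - (f x + g x) - RtoC (s - x) * (lf + lg))%C with
    ((f s - f x - RtoC (s - x) * lf) + (g s - g x - RtoC (s - x) * lg))%C by ring.
  eapply Rle_trans; [apply Cmod_triangle|]; lra.
Qed.

(** Carathéodory's form of differentiability: a factorisation
    [f s - f x = (Q s - Q x) * k s] near [x] with [k] continuous at [x]. *)
Lemma has_deriv_factor f Q k x Q' :
  (exists d0, 0 < d0 /\ forall s, Rabs (s - x) < d0 -> (f s - f x = (Q s - Q x) * k s)%C) ->
  has_deriv Q x Q' -> Ccont_at k x -> has_deriv f x (Q' * k x)%C.
Proof.
  intros [d0 [Hd0 Hfac]] HQ Hk eps He.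
  set (K := Cmod (k x) + 1); assert (HK : 1 <= K) by (pose proof (Cmod_ge_0 (k x)); unfold K; lra).
  set (L := Cmod Q' + 1); assert (HL : 1 <= L) by (pose proof (Cmod_ge_0 Q'); unfold L; lra).
  destruct (HQ (eps / (2 * K))) as [d1 [Hd1 H1]]; [apply Rdiv_lt_0_compat; lra|].
  destruct (Hk (Rmin 1 (eps / (2 * L)))) as [d2 [Hd2 H2]].
  { apply Rmin_pos; [lra|]; apply Rdiv_lt_0_compat; lra. }
  exists (Rmin d0 (Rmin d1 d2)); split; [repeat apply Rmin_pos; lra|]; intros s Hs.
  pose proof (Rmin_l d0 (Rmin d1 d2)); pose proof (Rmin_r d0 (Rmin d1 d2)).
  pose proof (Rmin_l d1 d2); pose proof (Rmin_r d1 d2).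
  pose proof (Rmin_l 1 (eps / (2 * L))); pose proof (Rmin_r 1 (eps / (2 * L))).
  specialize (H1 s ltac:(lra)); specialize (H2 s I ltac:(lra)).
  rewrite Hfac by lra.
  set (r := Rabs (s - x)) in *; assert (Hr : 0 <= r) by apply Rabs_pos.
  replace ((Q s - Q x) * k s - RtoC (s - x) * (Q' * k x))%C with
    ((Q s - Q x - RtoC (s - x) * Q') * k s + RtoC (s - x) * Q' * (k s - k x))%C by ring.
  eapply Rle_trans; [apply Cmod_triangle|]; rewrite !Cmod_mult, Cmod_R; fold r.
  assert (Hks : Cmod (k s) <= K) by (pose proof (Cmod_triangle_rev (k s) (k x)); unfold K; lra).
  assert (T1 : Cmod (Q s - Q x - RtoC (s - x) * Q') * Cmod (k s) <= eps / (2 * K) * r * K).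
  { apply Rmult_le_compat; try apply Cmod_ge_0; lra. }
  assert (T2 : r * Cmod Q' * Cmod (k s - k x) <= r * L * (eps / (2 * L))).
  { apply Rmult_le_compat; try apply Rmult_le_pos; try apply Cmod_ge_0; try lra.
    apply Rmult_le_compat_l; unfold L; lra. }
  replace (eps / (2 * K) * r * K) with (eps / 2 * r) in T1 by (field; lra).
  replace (r * L * (eps / (2 * L))) with (eps / 2 * r) in T2 by (field; lra).
  lra.
Qed.

Lemma Ccont_at_nonzero_near h x : Ccont_at h x -> h x <> 0%C ->
  exists d, 0 < d /\ forall s, Rabs (s - x) < d -> h s <> 0%C.
Proof.
  intros Hh Hnz; destruct (Hh (Cmod (h x))) as [d [Hd H]]; [apply Cmod_gt_0; auto|].
  exists d; split; auto; intros s Hs Z; specialize (H s I Hs).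
  rewrite Z, Cmod_minus_sym in H; replace (h x - 0)%C with (h x) in H by ring; lra.
Qed.

Lemma has_deriv_mult f g x lf lg : has_deriv f x lf -> has_deriv g x lg ->
  has_deriv (fun t => f t * g t)%C x (lf * g x + f x * lg)%C.
Proof.
  intros Hf Hg.
  apply (has_deriv_ext (fun t => (f t - f x) * g t + f x * g t)%C); [intros; ring|].
  apply has_deriv_eq with (lf * g x + lg * f x)%C; [|ring].
  apply has_deriv_plus.
  - apply (has_deriv_factor _ f g); auto; [|exact (has_deriv_continuous g x lg Hg)].
    exists 1; split; [lra|]; intros; ring.
  - apply (has_deriv_factor _ g (fun _ => f x)); auto; [|apply Ccont_within_const].
    exists 1; split; [lra|]; intros; ring.
Qed.

Lemma has_deriv_inv f x l : has_deriv f x l -> f x <> 0%C ->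
  has_deriv (fun t => / f t)%C x (- l / (f x * f x))%C.
Proof.
  intros Hf Hnz; assert (Hc := has_deriv_continuous f x l Hf).
  destruct (Ccont_at_nonzero_near f x Hc Hnz) as [d [Hd Hnear]].
  apply has_deriv_eq with (l * (-1 * / (f x * f x)))%C; [|field; auto].
  apply (has_deriv_factor _ f (fun t => -1 * / (f t * f x))%C); auto.
  - exists d; split; auto; intros s Hs; field; split; auto.
  - apply Ccont_within_mult; [apply Ccont_within_const|].
    apply Ccont_within_inv; [|apply Cmult_neq_0; auto].
    apply Ccont_within_mult; auto using Ccont_within_const.
Qed.

Lemma has_deriv_sqrt W Q x Q' : has_deriv Q x Q' -> Ccont_at W x -> W x <> 0%C ->
  (exists d, 0 < d /\ forall s, Rabs (s - x) < d -> (W s * W s)%C = Q s) ->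
  has_deriv W x (Q' / (2 * W x))%C.
Proof.
  intros HQ HW Hnz [d0 [Hd0 HWQ]].
  assert (HS : Ccont_at (fun s => W s + W x)%C x)
    by (apply Ccont_within_plus; auto using Ccont_within_const).
  assert (HS0 : (W x + W x)%C <> 0%C).
  { replace (W x + W x)%C with (2 * W x)%C by ring; apply Cmult_neq_0; auto.
    intro K; injection K; lra. }
  destruct (Ccont_at_nonzero_near _ x HS HS0) as [d [Hd Hnear]].
  apply has_deriv_eq with (Q' * / (W x + W x))%C; [|field; auto].
  apply (has_deriv_factor _ Q (fun s => / (W s + W x))%C); auto.
  - exists (Rmin d0 d); split; [apply Rmin_pos; lra|]; intros s Hs.
    pose proof (Rmin_l d0 d); pose proof (Rmin_r d0 d).
    rewrite <- (HWQ s), <- (HWQ x) by (try rewrite Rminus_diag, Rabs_R0; lra).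
    field; apply Hnear; lra.
  - apply Ccont_within_inv; auto.
Qed.

Lemma RInt_FTC_interior (F D : R -> C) a b : 0 < a -> a <= b -> b < 1 -> cont01 D ->
  (forall x, 0 < x < 1 -> has_deriv F x (D x)) ->
  @RInt C_R_CompleteNormedModule D a b = (F b - F a)%C.
Proof.
  intros Ha Hab Hb HD HF; apply is_RInt_unique.
  apply (@is_RInt_derive C_R_CompleteNormedModule F D a b); intros x Hx;
    rewrite Rmin_left, Rmax_right in Hx by lra.
  - apply has_deriv_is_derive, HF; lra.
  - apply Ccont_at_continuous, cont01_interior; auto; lra.
Qed.

Lemma cont01_small_step f t eps c : cont01 f -> 0 <= t <= 1 -> 0 < eps -> 0 < c ->
  exists h, 0 < h <= c /\
    forall s, 0 <= s <= 1 -> Rabs (s - t) <= h -> Cmod (f s - f t) < eps.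
Proof.
  intros Hf Ht He Hc; destruct (Hf t Ht eps He) as [d [Hd H]].
  exists (Rmin (d / 2) c); pose proof (Rmin_l (d / 2) c); pose proof (Rmin_r (d / 2) c).
  split; [split; [apply Rmin_pos|]; lra|]; intros s Hs Hst; apply H; [exact Hs|lra].
Qed.

(** Derivatives exist only inside [(0,1)], so the endpoints are reached by continuity. *)
Lemma RInt_closed_derivative (F D : R -> C) : cont01 F -> cont01 D -> F 0 = F 1 ->
  (forall x, 0 < x < 1 -> has_deriv F x (D x)) -> @RInt C_R_CompleteNormedModule D 0 1 = RtoC 0.
Proof.
  intros HF HD E01 Hd.
  destruct (cont01_bound D HD) as [BD [HBD HBD']].
  apply Cmod_eq_0, Rle_antisym; [|apply Cmod_ge_0].
  apply le_epsilon; intros eps He; rewrite Rplus_0_l.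
  set (c := Rmin (1 / 3) (eps / (4 * BD))).
  assert (Hc : 0 < c) by (apply Rmin_pos; [|apply Rdiv_lt_0_compat]; lra).
  assert (Hc3 : c <= 1 / 3) by apply Rmin_l.
  assert (HcB : BD * c <= eps / 4).
  { apply Rle_trans with (BD * (eps / (4 * BD))); [apply Rmult_le_compat_l; [lra|apply Rmin_r]|].
    right; field; lra. }
  destruct (cont01_small_step F 0 (eps / 4) c HF ltac:(lra) ltac:(lra) Hc) as [a [Ha H0]].
  destruct (cont01_small_step F 1 (eps / 4) c HF ltac:(lra) ltac:(lra) Hc) as [h [Hh H1]].
  set (b := 1 - h).
  assert (Fa : Cmod (F a - F 0) < eps / 4) by (apply H0; [|rewrite Rminus_0_r, Rabs_pos_eq]; lra).
  assert (Fb : Cmod (F b - F 1) < eps / 4).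
  { apply H1; unfold b; [lra|]; replace (1 - h - 1) with (- h) by ring.
    rewrite Rabs_Ropp, Rabs_pos_eq; lra. }
  assert (Ex1 := ex_RInt_cont01 D 0 a ltac:(lra) ltac:(lra) ltac:(lra) HD).
  assert (Ex2 := ex_RInt_cont01 D a b ltac:(lra) ltac:(unfold b; lra) ltac:(unfold b; lra) HD).
  assert (Ex3 := ex_RInt_cont01 D b 1 ltac:(unfold b; lra) ltac:(unfold b; lra) ltac:(lra) HD).
  assert (B1 := Cmod_RInt_le D 0 a BD ltac:(lra) Ex1 ltac:(intros; apply HBD'; lra)).
  assert (B3 := Cmod_RInt_le D b 1 BD ltac:(unfold b; lra) Ex3
                  ltac:(intros; apply HBD'; unfold b in *; lra)).
  rewrite <- (@RInt_Chasles C_R_CompleteNormedModule D 0 a 1),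
          <- (@RInt_Chasles C_R_CompleteNormedModule D a b 1);
    auto; [|apply (@ex_RInt_Chasles C_R_NormedModule D a b 1); auto].
  rewrite (RInt_FTC_interior F D a b) by (auto; unfold b; lra).
  set (I1 := @RInt C_R_CompleteNormedModule D 0 a) in *.
  set (I3 := @RInt C_R_CompleteNormedModule D b 1) in *.
  change (Cmod (I1 + ((F b - F a) + I3))%C <= eps).
  replace (I1 + ((F b - F a) + I3))%C with (I1 + I3 + (F b - F 1) - (F a - F 0))%C
    by (rewrite E01; ring).
  eapply Rle_trans; [apply Cmod_triangle|]; rewrite Cmod_opp.
  eapply Rle_trans; [apply Rplus_le_compat_r, Cmod_triangle|].
  eapply Rle_trans; [apply Rplus_le_compat_r, Rplus_le_compat_r, Cmod_triangle|].
  unfold b in B3; replace (1 - (1 - h)) with h in B3 by ring.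
  assert (BD * a <= eps / 4) by (apply Rle_trans with (BD * c); [apply Rmult_le_compat_l|]; lra).
  assert (BD * h <= eps / 4) by (apply Rle_trans with (BD * c); [apply Rmult_le_compat_l|]; lra).
  lra.
Qed.

Definition Csum (L : list nat) (f : nat -> C) : C := fold_right Cplus 0%C (map f L).

Lemma Csum_cons a L f : Csum (a :: L) f = (f a + Csum L f)%C.
Proof. reflexivity. Qed.

Lemma Csum_plus L (f h : nat -> C) : Csum L (fun k => f k + h k)%C = (Csum L f + Csum L h)%C.
Proof. induction L as [|a L IH]; [unfold Csum; simpl; ring|]; rewrite !Csum_cons, IH; ring. Qed.

Lemma Csum_scal L (a : C) (f : nat -> C) : Csum L (fun k => a * f k)%C = (a * Csum L f)%C.
Proof. induction L as [|b L IH]; [unfold Csum; simpl; ring|]; rewrite !Csum_cons, IH; ring. Qed.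

Lemma Csum_ext L (f h : nat -> C) : (forall k, In k L -> f k = h k) -> Csum L f = Csum L h.
Proof.
  induction L as [|a L IH]; intros E; auto.
  rewrite !Csum_cons, E by (simpl; auto); f_equal; apply IH; intros; apply E; simpl; auto.
Qed.

Lemma Csum_zero L (f : nat -> C) : (forall k, In k L -> f k = 0%C) -> Csum L f = 0%C.
Proof.
  intros E; rewrite (Csum_ext L f (fun k => 0 * 0)%C) by (intros; rewrite E; auto; ring).
  rewrite Csum_scal; ring.
Qed.

Lemma Csum_swap I K (f : nat -> nat -> C) :
  Csum I (fun i => Csum K (fun k => f i k)) = Csum K (fun k => Csum I (fun i => f i k)).
Proof.
  induction I as [|a I IH].
  - symmetry; apply Csum_zero; reflexivity.
  - rewrite Csum_cons, IH, <- Csum_plus; reflexivity.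
Qed.

Lemma cont01_Csum L (f : nat -> R -> C) : (forall k, In k L -> cont01 (f k)) ->
  cont01 (fun t => Csum L (fun k => f k t)).
Proof.
  induction L as [|a L IH]; intros H; [apply (cont01_const 0%C)|].
  apply cont01_plus; [apply H; simpl; auto|apply IH; intros; apply H; simpl; auto].
Qed.

Lemma RInt_Csum L (f : nat -> R -> C) : (forall k, In k L -> cont01 (f k)) ->
  @RInt C_R_CompleteNormedModule (fun t => Csum L (fun k => f k t)) 0 1 =
  Csum L (fun k => @RInt C_R_CompleteNormedModule (f k) 0 1).
Proof.
  induction L as [|a L IH]; intros H.
  - unfold Csum; simpl; rewrite RInt_const; unfold scal; simpl; unfold prod_scal; simpl.
    unfold RtoC, scal; simpl; unfold mult; simpl; f_equal; apply Rmult_0_r.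
  - rewrite Csum_cons, <- IH by (intros; apply H; simpl; auto).
    apply RInt_Cplus; apply ex_RInt01; [apply H; simpl; auto|].
    apply cont01_Csum; intros; apply H; simpl; auto.
Qed.

Lemma in_idx g k : In k (idx g) -> (2 <= k <= 2 * g + 1)%nat.
Proof. unfold idx; intros H; apply in_seq in H; lia. Qed.

Lemma pdist_le g p q B : 0 <= B -> (forall k, In k (idx g) -> Cmod (p k - q k) <= B) ->
  pdist g p q <= B.
Proof.
  unfold pdist; intros HB; induction (idx g) as [|a L IH]; simpl; auto.
  intros H; apply Rmax_lub; [apply H; simpl; auto|apply IH; intros; apply H; simpl; auto].
Qed.

Lemma pdist_diag g p : pdist g p p <= 0.
Proof.
  apply pdist_le; [lra|]; intros k _.
  replace (p k - p k)%C with (RtoC 0) by ring; rewrite Cmod_0; lra.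
Qed.

Lemma shift_other p j h k : k <> j -> shift p j h k = p k.
Proof. intros H; unfold shift; apply Nat.eqb_neq in H; rewrite H; auto. Qed.

Lemma shift_same p j h : shift p j h j = (p j + h)%C.
Proof. unfold shift; rewrite Nat.eqb_refl; auto. Qed.

Lemma shift_0 p j : shift p j 0%C = p.
Proof.
  apply functional_extensionality; intros k; unfold shift.
  destruct (Nat.eqb k j); auto; ring.
Qed.

Lemma pdist_shift g p j h : pdist g p (shift p j h) <= Cmod h.
Proof.
  apply pdist_le; [apply Cmod_ge_0|]; intros k _; unfold shift.
  destruct (Nat.eqb k j).
  - replace (p k - (p k + h))%C with (- h)%C by ring; rewrite Cmod_opp; lra.
  - replace (p k - p k)%C with (RtoC 0) by ring; rewrite Cmod_0; apply Cmod_ge_0.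
Qed.

Lemma prod_linear_shift_notin (L : list nat) p j h z : ~ In j L ->
  fold_right Cmult 1%C (map (fun k => (z - shift p j h k)%C) L) =
  fold_right Cmult 1%C (map (fun k => (z - p k)%C) L).
Proof.
  induction L as [|a L IH]; simpl; intros Hn; auto.
  rewrite shift_other by (intro; apply Hn; auto); rewrite IH; auto.
Qed.

Lemma prod_linear_shift_in (L : list nat) p j h z : NoDup L -> In j L ->
  (fold_right Cmult 1%C (map (fun k => (z - shift p j h k)%C) L) * (z - p j) =
   fold_right Cmult 1%C (map (fun k => (z - p k)%C) L) * (z - p j - h))%C.
Proof.
  induction L as [|a L IH]; simpl; intros Hnd Hin; [contradiction|].
  inversion Hnd; subst; destruct Hin as [E|Hin].
  - subst a; rewrite shift_same, prod_linear_shift_notin by auto; ring.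
  - rewrite shift_other by (intro; subst; contradiction).
    rewrite <- Cmult_assoc, IH by auto; ring.
Qed.

Lemma hyp_poly_shift g p j h z : (2 <= j <= 2 * g + 1)%nat ->
  (hyp_poly g (shift p j h) z * (z - p j) = hyp_poly g p z * (z - p j - h))%C.
Proof.
  intros Hj; unfold hyp_poly; rewrite <- !Cmult_assoc; f_equal.
  apply prod_linear_shift_in; [apply seq_NoDup|apply in_seq; lia].
Qed.

Lemma hyp_poly_neq_0 g (p : nat -> C) (z : C) : z <> 0%C ->
  (forall k, (2 <= k <= 2 * g + 1)%nat -> z <> p k) -> hyp_poly g p z <> 0%C.
Proof.
  intros H0 H; unfold hyp_poly; apply Cmult_neq_0; auto.
  assert (Hin : forall k, In k (idx g) -> z <> p k) by (intros k Hk; apply H, in_idx, Hk).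
  induction (idx g) as [|a L IH]; simpl.
  - intro K; injection K; lra.
  - apply Cmult_neq_0; [apply Cminus_neq_0, Hin; simpl; auto|].
    apply IH; intros; apply Hin; simpl; auto.
Qed.

Section LiftedCycle.
Context {g : nat} {U : (nat -> C) -> Prop} {gam dgam : R -> C} {w : (nat -> C) -> R -> C}.
Hypothesis Hcyc : lifted_cycle g U gam dgam w.

Lemma cycle_gam_deriv x : has_deriv gam x (dgam x).
Proof. destruct Hcyc as [H _]; apply is_derive_has_deriv, H. Qed.

Lemma cycle_gam_cont : cont01 gam.
Proof. intros t _; apply Ccont_at_within, (has_deriv_continuous _ _ _ (cycle_gam_deriv t)). Qed.

Lemma cycle_dgam_cont : cont01 dgam.
Proof. destruct Hcyc as [_ [H _]]; exact H. Qed.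

Lemma cycle_gam_closed : gam 0 = gam 1.
Proof. destruct Hcyc as [_ [_ [H _]]]; exact H. Qed.

Lemma cycle_avoid p t i :
  U p -> 0 <= t <= 1 -> (1 <= i <= 2 * g + 1)%nat -> gam t <> ub p i.
Proof. destruct Hcyc as [_ [_ [_ [H _]]]]; auto. Qed.

Lemma cycle_w_sq p t : U p -> 0 <= t <= 1 -> (w p t * w p t)%C = hyp_poly g p (gam t).
Proof. destruct Hcyc as [_ [_ [_ [_ [H _]]]]]; auto. Qed.

Lemma cycle_w_closed p : U p -> w p 0 = w p 1.
Proof. destruct Hcyc as [_ [_ [_ [_ [_ [H _]]]]]]; auto. Qed.

Lemma cycle_w_cont p : U p -> cont01 (w p).
Proof.
  intros Hp t Ht eps He; destruct Hcyc as [_ [_ [_ [_ [_ [_ H]]]]]].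
  destruct (H p t Hp Ht eps He) as [d [Hd H1]]; exists d; split; auto.
  intros s Hs Hst; apply H1; auto; pose proof (pdist_diag g p); lra.
Qed.

Lemma cycle_gam_neq_0 p t : U p -> 0 <= t <= 1 -> gam t <> 0%C.
Proof. intros Hp Ht; exact (cycle_avoid p t 1 Hp Ht ltac:(lia)). Qed.

Lemma cycle_gam_sub_neq_0 p t k : U p -> 0 <= t <= 1 -> (2 <= k <= 2 * g + 1)%nat ->
  (gam t - p k)%C <> 0%C.
Proof.
  intros Hp Ht Hk; apply Cminus_neq_0.
  pose proof (cycle_avoid p t k Hp Ht ltac:(lia)) as H; unfold ub in H.
  destruct (Nat.eqb_spec k 1); [lia|exact H].
Qed.

Lemma cycle_w_neq_0 p t : U p -> 0 <= t <= 1 -> w p t <> 0%C.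
Proof.
  intros Hp Ht Z; apply (hyp_poly_neq_0 g p (gam t)).
  - apply (cycle_gam_neq_0 p); auto.
  - intros k Hk E; apply (cycle_gam_sub_neq_0 p t k); auto; rewrite E; ring.
  - rewrite <- cycle_w_sq, Z by auto; ring.
Qed.

Lemma cont01_inv_w p : U p -> cont01 (fun t => / w p t)%C.
Proof. intros Hp; apply cont01_inv; [apply cycle_w_cont|intros; apply cycle_w_neq_0]; auto. Qed.

Lemma cont01_inv_gam_sub p k : U p -> (2 <= k <= 2 * g + 1)%nat ->
  cont01 (fun t => / (gam t - p k))%C.
Proof.
  intros Hp Hk; apply cont01_inv; [|intros; apply (cycle_gam_sub_neq_0 p); auto].
  apply cont01_minus; [apply cycle_gam_cont|apply cont01_const].
Qed.

Lemma cont01_inv_2_gam_sub p k : U p -> (2 <= k <= 2 * g + 1)%nat ->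
  cont01 (fun t => / (2 * (gam t - p k)))%C.
Proof.
  intros Hp Hk; apply cont01_inv.
  - apply cont01_mult; [apply cont01_const|].
    apply cont01_minus; [apply cycle_gam_cont|apply cont01_const].
  - intros t Ht; apply Cmult_neq_0; [intro K; injection K; lra|].
    apply (cycle_gam_sub_neq_0 p); auto.
Qed.

(** Joint continuity of the transported branch [w] on the compact [[0,1]] makes
    [w q -> w p] uniform as [q -> p]. *)
Lemma cycle_w_uniform p : U p -> forall eta, 0 < eta -> exists delta, 0 < delta /\
  forall q, U q -> pdist g p q < delta -> forall t, 0 <= t <= 1 -> Cmod (w q t - w p t) < eta.
Proof.
  intros Hp eta He; destruct Hcyc as [_ [_ [_ [_ [_ [_ H]]]]]].
  assert (Hch : forall x : R, {d : posreal | forall q s, U q -> 0 <= s <= 1 -> pdist g p q < d ->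
        Rabs (s - clamp x) < d -> Cmod (w q s - w p (clamp x)) < eta / 2}).
  { intros x; apply constructive_indefinite_description.
    destruct (H p (clamp x) Hp (clamp_in x) (eta / 2) ltac:(lra)) as [d [Hd H1]].
    exists (mkposreal d Hd); simpl; auto. }
  set (delta := fun x : Compactness.Tn 1 R => proj1_sig (Hch (fst x))).
  destruct (compactness_value 1 (0, tt) (1, tt) delta) as [dd Hdd].
  exists dd; split; [apply cond_pos|]; intros q Hq Hpq t Ht.
  specialize (Hdd (t, tt)); simpl in Hdd.
  apply NNPP; intro Hn; apply Hdd; [split; auto|].
  intros [[t' u] [[Ht' _] [[Htt' _] Hle]]].
  unfold delta in *; simpl in *; destruct (Hch t') as [d Hd]; simpl in *.
  rewrite clamp_id in Hd by auto.
  assert (A1 := Hd q t Hq Ht ltac:(lra) Htt').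
  assert (A2 : Cmod (w p t - w p t') < eta / 2).
  { apply Hd; auto; pose proof (pdist_diag g p); pose proof (cond_pos d); lra. }
  apply Hn; replace (w q t - w p t)%C with ((w q t - w p t') - (w p t - w p t'))%C by ring.
  eapply Rle_lt_trans; [apply Cmod_triangle|]; rewrite Cmod_opp; lra.
Qed.

End LiftedCycle.

(** * Differentiation of period integrals in the branch points *)

Lemma is_derive_C_intro (f : C -> C) x l :
  (forall eps, 0 < eps -> exists d, 0 < d /\ forall y, Cmod (y - x) < d ->
     Cmod (f y - f x - (y - x) * l) <= eps * Cmod (y - x)) ->
  @is_derive C_AbsRing C_NormedModule f x l.
Proof.
  intros H; split; [apply is_linear_scal_l|].
  intros y Hy.
  apply (@is_filter_lim_locally_unique C_AbsRing (AbsRing_NormedModule C_AbsRing)) in Hy.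
  subst y; intros [eps He]; destruct (H eps He) as [d [Hd H1]]; exists (mkposreal d Hd).
  intros y Hy; unfold ball in Hy; simpl in *; unfold AbsRing_ball in Hy; unfold norm; simpl.
  exact (H1 y Hy).
Qed.

(** [a] and [b] are the branches of [v] before and after moving [u_j] by [y], and
    [z = u - u_j]: then [1/b = (1/a) (1 + y/(2z))] up to an error [O(|y| |a - b|)]. *)
Lemma inv_branch_expansion (a b z y : C) (m M B eta : R) :
  a <> 0%C -> b <> 0%C -> z <> 0%C -> (b * b * z = a * a * (z - y))%C ->
  0 < m -> m <= Cmod a <= M -> Cmod (a - b) < eta -> eta <= m / 2 -> Cmod (/ z) <= B ->
  Cmod (/ b - / a - y * (/ a * / (2 * z))) <= Cmod y * (B * (3 * M + m) / (m * m * m)) * eta.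
Proof.
  intros Ha Hb Hz Hrel Hm [HmA HAM] Hab Heta HB.
  assert (Hy : y = ((a * a - b * b) * z / (a * a))%C).
  { transitivity ((a * a * z - a * a * (z - y)) / (a * a))%C; [field; auto|].
    rewrite <- Hrel; field; auto. }
  assert (Hbm : m / 2 <= Cmod b).
  { pose proof (Cmod_triangle_rev a (a - b)) as T.
    replace (a - (a - b))%C with b in T by ring; lra. }
  assert (Hsum : m <= Cmod (a + b)).
  { pose proof (Cmod_triangle_rev (2 * a) (a - b)) as T.
    replace (2 * a - (a - b))%C with (a + b)%C in T by ring.
    rewrite Cmod_mult, (Cmod_R_nonneg 2) in T by lra; lra. }
  assert (Hsum0 : (a + b)%C <> 0%C) by (intro K; rewrite K, Cmod_0 in Hsum; lra).
  assert (HN : Cmod (2 * a + b) <= 3 * M + m).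
  { replace (2 * a + b)%C with (3 * a - (a - b))%C by ring.
    eapply Rle_trans; [apply Cmod_triangle|].
    rewrite Cmod_opp, Cmod_mult, (Cmod_R_nonneg 3) by lra; lra. }
  replace (/ b - / a - y * (/ a * / (2 * z)))%C with
    (y * / z * (a - b) * (2 * a + b) / (2 * a * b * (a + b)))%C
    by (rewrite Hy; field; repeat split; auto).
  assert (H2 : (2 : C) <> 0%C) by (intro K; injection K; lra).
  rewrite Cmod_div by (repeat apply Cmult_neq_0; auto).
  rewrite !Cmod_mult, (Cmod_R_nonneg 2) by lra.
  assert (Hden : m * m * m <= 2 * Cmod a * Cmod b * Cmod (a + b)).
  { replace (m * m * m) with (2 * m * (m / 2) * m) by field.
    apply Rmult_le_compat; [nra|lra| |lra]; apply Rmult_le_compat; lra. }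
  pose proof (Cmod_ge_0 y); pose proof (Cmod_ge_0 (/ z)); pose proof (Cmod_ge_0 (a - b)).
  pose proof (Cmod_ge_0 (2 * a + b)).
  apply Rle_trans with (Cmod y * B * eta * (3 * M + m) / (m * m * m)); [|right; field; lra].
  unfold Rdiv; apply Rmult_le_compat.
  - repeat apply Rmult_le_pos; lra.
  - apply Rlt_le, Rinv_0_lt_compat, Rlt_le_trans with (m * m * m); [|exact Hden].
    repeat apply Rmult_lt_0_compat; lra.
  - apply Rmult_le_compat; [repeat apply Rmult_le_pos; lra|lra| |lra].
    apply Rmult_le_compat; [apply Rmult_le_pos; lra|lra| |lra].
    apply Rmult_le_compat; lra.
  - apply Rinv_le_contravar; [repeat apply Rmult_lt_0_compat|]; lra.
Qed.

Section ParameterDerivative.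
Context {g : nat} {U : (nat -> C) -> Prop} {gam dgam : R -> C} {w : (nat -> C) -> R -> C}.
Hypothesis hU : par_open g U.
Hypothesis Hcyc : lifted_cycle g U gam dgam w.

(** Since [v^2] has the simple factor [u - u_j], moving [u_j] multiplies [1 / v] to first
    order by [1 + h / (2 (u - u_j))]. *)
Lemma cycle_inv_w_expansion p j y t m M B eta :
  U p -> U (shift p j y) -> (2 <= j <= 2 * g + 1)%nat -> 0 <= t <= 1 -> 0 < m ->
  m <= Cmod (w p t) <= M -> Cmod (/ (gam t - p j)) <= B ->
  Cmod (w (shift p j y) t - w p t) < eta -> eta <= m / 2 ->
  Cmod (/ w (shift p j y) t - / w p t - y * (/ w p t * / (2 * (gam t - p j)))) <=
  Cmod y * (B * (3 * M + m) / (m * m * m)) * eta.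
Proof.
  intros Hp Hq Hj Ht Hm HmM HB Hw Heta.
  apply inv_branch_expansion; auto.
  - apply (cycle_w_neq_0 Hcyc p); auto.
  - apply (cycle_w_neq_0 Hcyc (shift p j y)); auto.
  - apply (cycle_gam_sub_neq_0 Hcyc); auto.
  - rewrite !(cycle_w_sq Hcyc) by auto; apply hyp_poly_shift; auto.
  - rewrite Cmod_minus_sym; auto.
Qed.

Lemma is_derive_cycle_integral p j (G : R -> C) :
  U p -> (2 <= j <= 2 * g + 1)%nat -> cont01 G ->
  @is_derive C_AbsRing C_NormedModule
    (fun h => @RInt C_R_CompleteNormedModule (fun t => G t / w (shift p j h) t)%C 0 1) (RtoC 0)
    (@RInt C_R_CompleteNormedModule (fun t => G t / w p t * / (2 * (gam t - p j)))%C 0 1).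
Proof.
  intros Hp Hj HG; apply is_derive_C_intro.
  destruct (hU p Hp) as [epsU [HepsU HU']].
  destruct (cont01_lbound (w p) (cycle_w_cont Hcyc p Hp)
              (fun t Ht => cycle_w_neq_0 Hcyc p t Hp Ht)) as [m [Hm Hm']].
  destruct (cont01_bound (w p) (cycle_w_cont Hcyc p Hp)) as [M [HM HM']].
  destruct (cont01_bound _ (cont01_inv_gam_sub Hcyc p j Hp Hj)) as [B [HB HB']].
  destruct (cont01_bound G HG) as [BG [HBG HBG']].
  set (K := B * (3 * M + m) / (m * m * m)).
  assert (HK : 0 < K)
    by (apply Rdiv_lt_0_compat; [apply Rmult_lt_0_compat|repeat apply Rmult_lt_0_compat]; lra).
  assert (HGw : forall q, U q -> cont01 (fun t => G t / w q t)%C)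
    by (intros q Hq; apply cont01_mult; auto; apply (cont01_inv_w Hcyc); auto).
  assert (HGd : cont01 (fun t => G t / w p t * / (2 * (gam t - p j)))%C)
    by (apply cont01_mult; auto; apply (cont01_inv_2_gam_sub Hcyc); auto).
  intros eps He.
  set (eta := Rmin (m / 2) (eps / (BG * K))).
  assert (Heta : 0 < eta).
  { apply Rmin_pos; [lra|]; apply Rdiv_lt_0_compat; [lra|apply Rmult_lt_0_compat; lra]. }
  assert (Heta1 : eta <= m / 2) by apply Rmin_l.
  assert (Heta2 : eta <= eps / (BG * K)) by apply Rmin_r.
  destruct (cycle_w_uniform Hcyc p Hp eta Heta) as [delta [Hdelta Hunif]].
  exists (Rmin epsU delta); split; [apply Rmin_pos; lra|]; intros y Hy.
  pose proof (Rmin_l epsU delta); pose proof (Rmin_r epsU delta).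
  replace (y - 0)%C with y in * by ring; rewrite shift_0.
  set (q := shift p j y); pose proof (pdist_shift g p j y) as Hpq; fold q in Hpq.
  assert (Hq : U q) by (apply HU'; lra).
  rewrite <- RInt_Cmult, <- !RInt_Cminus;
    [|apply ex_RInt01, cont01_minus; auto|apply ex_RInt_Cmult, ex_RInt01; auto
     |apply ex_RInt01; auto|apply ex_RInt01; auto|apply ex_RInt01; auto].
  eapply Rle_trans; [apply Cmod_RInt_le with (B := BG * (Cmod y * K * eta)); [lra| |]|].
  - apply ex_RInt01, cont01_minus; [apply cont01_minus; auto|].
    apply cont01_mult; auto; apply cont01_const.
  - intros t Ht.
    replace (G t / w q t - G t / w p t - y * (G t / w p t * / (2 * (gam t - p j))))%C with
      (G t * (/ w q t - / w p t - y * (/ w p t * / (2 * (gam t - p j)))))%C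
      by (unfold Cdiv; ring).
    rewrite Cmod_mult; apply Rmult_le_compat; try apply Cmod_ge_0; [apply HBG'; auto|].
    apply cycle_inv_w_expansion; auto.
    apply (Hunif q); auto; lra.
  - replace (BG * (Cmod y * K * eta) * (1 - 0)) with (BG * K * eta * Cmod y) by ring.
    apply Rmult_le_compat_r; [apply Cmod_ge_0|].
    apply Rle_trans with (BG * K * (eps / (BG * K))); [apply Rmult_le_compat_l; nra|].
    right; field; lra.
Qed.

End ParameterDerivative.

(** * The sum of the residue coefficients *)

Section ExactForm.
Context {g : nat} {U : (nat -> C) -> Prop} {gam dgam : R -> C} {w : (nat -> C) -> R -> C}.
Hypothesis Hcyc : lifted_cycle g U gam dgam w.
Variable p : nat -> C.
Hypothesis Hp : U p.

Lemma cont01_period_integrand (F : C -> C) : cont01 (fun t => F (gam t)) ->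
  cont01 (fun t => F (gam t) * dgam t / w p t)%C.
Proof.
  intros HF; apply cont01_mult; [apply cont01_mult; auto; apply (cycle_dgam_cont Hcyc)|].
  apply (cont01_inv_w Hcyc); auto.
Qed.

Lemma has_deriv_prod_gam_sub (L : list nat) x :
  (forall k, In k L -> (gam x - p k)%C <> 0%C) ->
  has_deriv (fun s => fold_right Cmult 1%C (map (fun k => (gam s - p k)%C) L)) x
    (fold_right Cmult 1%C (map (fun k => (gam x - p k)%C) L) * dgam x *
     Csum L (fun k => / (gam x - p k)))%C.
Proof.
  induction L as [|a L IH]; intros Hnz; simpl.
  - apply has_deriv_eq with (RtoC 0); [apply has_deriv_const|unfold Csum; simpl; ring].
  - assert (Ha : has_deriv (fun s => gam s - p a)%C x (dgam x)).
    { apply has_deriv_eq with (dgam x + 0)%C; [|ring].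
      apply (has_deriv_plus gam (fun _ => - p a)%C); [apply (cycle_gam_deriv Hcyc)|].
      apply has_deriv_const. }
    eapply has_deriv_eq;
      [apply has_deriv_mult; [exact Ha|apply IH; intros; apply Hnz; simpl; auto]|].
    rewrite Csum_cons; field; apply Hnz; simpl; auto.
Qed.

Definition log_deriv_sum (t : R) : C := Csum (idx g) (fun k => / (gam t - p k))%C.

(** [d(u/v)/dt], because [d log v = (1/u + sum_k 1/(u - u_k)) du / 2]. *)
Definition exact_integrand (t : R) : C :=
  (dgam t / w p t * (1 - gam t * log_deriv_sum t) / 2)%C.

Lemma has_deriv_u_over_v x : 0 < x < 1 ->
  has_deriv (fun t => gam t / w p t)%C x (exact_integrand x).
Proof.
  intros Hx; assert (Hx' : 0 <= x <= 1) by lra.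
  set (Pi := fun s => fold_right Cmult 1%C (map (fun k => (gam s - p k)%C) (idx g))).
  assert (Wnz : w p x <> 0%C) by (apply (cycle_w_neq_0 Hcyc); auto).
  assert (Gnz : gam x <> 0%C) by (apply (cycle_gam_neq_0 Hcyc p); auto).
  assert (Hsq : (w p x * w p x)%C = (gam x * Pi x)%C) by (apply (cycle_w_sq Hcyc); auto).
  assert (HQ := has_deriv_mult gam Pi x _ _ (cycle_gam_deriv Hcyc x)
    (has_deriv_prod_gam_sub (idx g) x
       (fun k Hk => cycle_gam_sub_neq_0 Hcyc p x k Hp Hx' (in_idx g k Hk)))).
  assert (HW := has_deriv_sqrt (w p) _ x _ HQ
    (cont01_interior _ x (cycle_w_cont Hcyc p Hp) Hx) Wnz).
  eapply has_deriv_eq.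
  - apply (has_deriv_mult gam (fun t => / w p t)%C); [apply (cycle_gam_deriv Hcyc)|].
    apply has_deriv_inv; auto; apply HW.
    exists (Rmin x (1 - x)); split; [apply Rmin_pos; lra|]; intros s Hs.
    pose proof (Rmin_l x (1 - x)); pose proof (Rmin_r x (1 - x)).
    apply (cycle_w_sq Hcyc); auto; apply Rabs_def2 in Hs; lra.
  - assert (Pnz : Pi x <> 0%C)
      by (intro Z; rewrite Z, Cmult_0_r in Hsq; exact (Cmult_neq_0 _ _ Wnz Wnz Hsq)).
    assert (EPi : Pi x = (w p x * w p x / gam x)%C) by (rewrite Hsq; field; auto).
    unfold exact_integrand, log_deriv_sum, Pi in *; rewrite EPi; field; auto.
Qed.

Lemma cont01_exact_integrand : cont01 exact_integrand.
Proof.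
  assert (HS : cont01 log_deriv_sum).
  { apply (cont01_Csum (idx g) (fun k t => / (gam t - p k))%C); intros k Hk.
    apply (cont01_inv_gam_sub Hcyc); auto; apply in_idx; auto. }
  apply cont01_mult; [|apply cont01_const].
  apply (cont01_mult (fun t => dgam t / w p t)%C).
  - apply cont01_mult; [apply (cycle_dgam_cont Hcyc)|apply (cont01_inv_w Hcyc); auto].
  - apply cont01_minus; [apply cont01_const|apply cont01_mult; auto; apply (cycle_gam_cont Hcyc)].
Qed.

Lemma RInt_exact_integrand : @RInt C_R_CompleteNormedModule exact_integrand 0 1 = RtoC 0.
Proof.
  apply (RInt_closed_derivative (fun t => gam t / w p t)%C).
  - apply cont01_mult; [apply (cycle_gam_cont Hcyc)|apply (cont01_inv_w Hcyc); auto].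
  - apply cont01_exact_integrand.
  - rewrite (cycle_gam_closed Hcyc), (cycle_w_closed Hcyc p Hp); reflexivity.
  - apply has_deriv_u_over_v.
Qed.

(** The integrand of [a_1 + ... + a_(2g+1)] is [-2 d(u / v)]. *)
Lemma cycle_residue_sum :
  (- cyc_int gam dgam w (fun _ => 1%C) p
   + Csum (idx g) (fun i => cyc_int gam dgam w (fun _ => 1%C) p
                             + p i * cyc_int gam dgam w (fun z => / (z - p i))%C p))%C = 0%C.
Proof.
  assert (H0 : cont01 (fun t => 1 * dgam t / w p t)%C)
    by (apply (cont01_period_integrand (fun _ => 1%C)), cont01_const).
  assert (Hi : forall i, In i (idx g) -> cont01 (fun t => / (gam t - p i) * dgam t / w p t)%C).
  { intros i Hi; apply (cont01_period_integrand (fun z => / (z - p i))%C).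
    apply (cont01_inv_gam_sub Hcyc); auto; apply in_idx; auto. }
  assert (Hsum : forall i, In i (idx g) ->
            cont01 (fun t => 1 * dgam t / w p t + p i * (/ (gam t - p i) * dgam t / w p t))%C)
    by (intros i Hi'; apply cont01_plus, cont01_mult; auto; apply cont01_const).
  unfold cyc_int; cbv beta.
  rewrite (Csum_ext _ _ (fun i => @RInt C_R_CompleteNormedModule
     (fun t => 1 * dgam t / w p t + p i * (/ (gam t - p i) * dgam t / w p t))%C 0 1)).
  2:{ intros i Hi'; rewrite RInt_Cplus, RInt_Cmult; auto using ex_RInt01, ex_RInt_Cmult. }
  rewrite <- RInt_Csum by exact Hsum.
  replace (- @RInt C_R_CompleteNormedModule (fun t => 1 * dgam t / w p t) 0 1)%C
    with (-1 * @RInt C_R_CompleteNormedModule (fun t => 1 * dgam t / w p t) 0 1)%C by ring.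
  rewrite <- RInt_Cmult by (apply ex_RInt01; auto).
  rewrite <- RInt_Cplus
    by (apply ex_RInt01;
        first [apply cont01_Csum; auto|apply cont01_mult; auto; apply cont01_const]).
  rewrite (RInt_ext_le _ (fun t => -2 * exact_integrand t)%C); [|lra|].
  - rewrite RInt_Cmult, RInt_exact_integrand; [ring|apply ex_RInt01, cont01_exact_integrand].
  - intros t Ht; assert (Wt : w p t <> 0%C) by (apply (cycle_w_neq_0 Hcyc); auto).
    rewrite (Csum_ext _ _ (fun i => dgam t / w p t * gam t * / (gam t - p i))%C).
    + unfold exact_integrand, log_deriv_sum; rewrite Csum_scal; field; auto.
    + intros i Hi'; field; split; auto.
      apply (cycle_gam_sub_neq_0 Hcyc); auto; apply in_idx; auto.
Qed.
End ExactForm.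

Lemma is_derive_C_scal (f : C -> C) x l (a : C) :
  @is_derive C_AbsRing C_NormedModule f x l ->
  @is_derive C_AbsRing C_NormedModule (fun y => a * f y)%C x (a * l)%C.
Proof.
  intros H; unfold is_derive in *.
  apply (filterdiff_ext_lin _
           (fun y : C_AbsRing => @scal _ C_NormedModule a (@scal _ C_NormedModule y l))).
  - exact (@filterdiff_scal_r_fct C_AbsRing _ C_NormedModule (locally x) _ a f _ Cmult_comm H).
  - intros y; change (a * (y * l) = y * (a * l))%C; ring.
Qed.

Lemma is_derive_C_Csum L (f : nat -> C -> C) (l : nat -> C) x :
  (forall k, In k L -> @is_derive C_AbsRing C_NormedModule (f k) x (l k)) ->
  @is_derive C_AbsRing C_NormedModule (fun y => Csum L (fun k => f k y)) x (Csum L l).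
Proof.
  induction L as [|a L IH]; intros H.
  - exact (@is_derive_const C_AbsRing C_NormedModule (RtoC 0) x).
  - apply (@is_derive_plus C_AbsRing C_NormedModule); [apply H; simpl; auto|].
    apply IH; intros; apply H; simpl; auto.
Qed.

Section Periods.
Context {g : nat} {U : (nat -> C) -> Prop}.
Context {gam dgam : nat -> R -> C} {w : nat -> (nat -> C) -> R -> C}.
Hypothesis hU : par_open g U.
Hypothesis hcyc : forall k, (k < 2 * g)%nat -> lifted_cycle g U (gam k) (dgam k) (w k).
Variables (c : nat -> C) (p : nat -> C).
Hypothesis hp : U p.

Definition cycle_ids : list nat := seq 0 (2 * g).

Lemma in_cycle_ids k : In k cycle_ids -> (k < 2 * g)%nat.
Proof. unfold cycle_ids; intros H; apply in_seq in H; lia. Qed.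

Lemma per_Csum F q :
  per g c gam dgam w F q = Csum cycle_ids (fun k => c k * cyc_int (gam k) (dgam k) (w k) F q)%C.
Proof. reflexivity. Qed.

Definition along_cycles (F : C -> C) : Prop :=
  forall k, (k < 2 * g)%nat -> cont01 (fun t => F (gam k t)).

Lemma along_cycles_const (a : C) : along_cycles (fun _ => a).
Proof. intros k _; apply cont01_const. Qed.

Lemma along_cycles_inv_sub i : (2 <= i <= 2 * g + 1)%nat -> along_cycles (fun z => / (z - p i))%C.
Proof. intros Hi k Hk; apply (cont01_inv_gam_sub (hcyc k Hk)); auto. Qed.

Lemma per_linear (a b : C) F G : along_cycles F -> along_cycles G ->
  per g c gam dgam w (fun z => a * F z + b * G z)%C p =
  (a * per g c gam dgam w F p + b * per g c gam dgam w G p)%C.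
Proof.
  intros HF HG; rewrite !per_Csum, <- !Csum_scal, <- Csum_plus; apply Csum_ext; intros k Hk.
  assert (Hc := hcyc k (in_cycle_ids k Hk)).
  assert (IF := ex_RInt01 _ (cont01_period_integrand Hc p hp F (HF k (in_cycle_ids k Hk)))).
  assert (IG := ex_RInt01 _ (cont01_period_integrand Hc p hp G (HG k (in_cycle_ids k Hk)))).
  unfold cyc_int.
  rewrite (RInt_ext_le _ (fun t => a * (F (gam k t) * dgam k t / w k p t)
                               + b * (G (gam k t) * dgam k t / w k p t))%C)
    by first [lra|intros; unfold Cdiv; ring].
  rewrite RInt_Cplus, !RInt_Cmult by auto using ex_RInt_Cmult; ring.
Qed.

Lemma is_derive_per F j : along_cycles F -> (2 <= j <= 2 * g + 1)%nat ->
  @is_derive C_AbsRing C_NormedModule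
    (fun h => per g c gam dgam w F (shift p j h)) (RtoC 0)
    (/ 2 * per g c gam dgam w (fun z => F z / (z - p j)) p)%C.
Proof.
  intros HF Hj.
  replace (/ 2 * per g c gam dgam w (fun z => F z / (z - p j)) p)%C with
    (Csum cycle_ids (fun k => c k * @RInt C_R_CompleteNormedModule
       (fun t => F (gam k t) * dgam k t / w k p t * / (2 * (gam k t - p j))) 0 1))%C.
  - apply is_derive_C_Csum; intros k Hk; apply is_derive_C_scal.
    assert (Hk' := in_cycle_ids k Hk).
    apply (is_derive_cycle_integral hU (hcyc k Hk') p j
             (fun t => F (gam k t) * dgam k t)%C hp Hj).
    apply cont01_mult; [apply HF; auto|apply (cycle_dgam_cont (hcyc k Hk'))].
  - rewrite per_Csum, <- Csum_scal; apply Csum_ext; intros k Hk.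
    assert (Hc := hcyc k (in_cycle_ids k Hk)); unfold cyc_int.
    match goal with |- @eq _ _ (Cmult _ (Cmult _ ?J)) =>
      transitivity (c k * (/ 2 * J))%C; [f_equal|ring] end.
    rewrite <- RInt_Cmult.
    + apply RInt_ext_le; [lra|]; intros t Ht.
      assert (Wt := cycle_w_neq_0 Hc p t hp Ht).
      assert (Gt := cycle_gam_sub_neq_0 Hc p t j hp Ht Hj).
      field; repeat split; auto; intro K; injection K; lra.
    + apply ex_RInt01, (cont01_period_integrand Hc p hp (fun z => F z / (z - p j))%C).
      apply cont01_mult; [apply HF, in_cycle_ids; auto|].
      apply (cont01_inv_gam_sub Hc); auto.
Qed.

Lemma per_ext_along F G :
  (forall k t, (k < 2 * g)%nat -> 0 <= t <= 1 -> F (gam k t) = G (gam k t)) ->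
  per g c gam dgam w F p = per g c gam dgam w G p.
Proof.
  intros E; rewrite !per_Csum; apply Csum_ext; intros k Hk; unfold cyc_int; f_equal.
  apply RInt_ext_le; [lra|]; intros t Ht; rewrite E by (auto; apply in_cycle_ids; auto); auto.
Qed.

Notation P := (per g c gam dgam w (fun _ => 1%C) p).
Notation Q i := (per g c gam dgam w (fun z => / (z - p i))%C p).

Lemma per_one_div j : per g c gam dgam w (fun z => 1 / (z - p j))%C p = Q j.
Proof. apply per_ext_along; intros; unfold Cdiv; ring. Qed.

Lemma acoef_ne_1 i q : i <> 1%nat -> acoef g c gam dgam w i q =
  (per g c gam dgam w (fun _ => 1%C) q + q i * per g c gam dgam w (fun z => / (z - q i))%C q)%C.
Proof. intros H; unfold acoef; apply Nat.eqb_neq in H; rewrite H; reflexivity. Qed.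

Lemma is_derive_acoef_1 j : (2 <= j <= 2 * g + 1)%nat -> p j <> 0%C ->
  @is_derive C_AbsRing C_NormedModule (fun h => acoef g c gam dgam w 1 (shift p j h)) (RtoC 0)
    (- (acoef g c gam dgam w 1 p + acoef g c gam dgam w j p) / (2 * p j))%C.
Proof.
  intros Hj Hpj.
  apply (is_derive_ext (fun h => -1 * per g c gam dgam w (fun _ => 1%C) (shift p j h))%C);
    [intros; unfold acoef; simpl; ring|].
  replace (- (acoef g c gam dgam w 1 p + acoef g c gam dgam w j p) / (2 * p j))%C
    with (-1 * (/ 2 * per g c gam dgam w (fun z => 1 / (z - p j)) p))%C.
  - apply is_derive_C_scal, is_derive_per; auto using along_cycles_const.
  - rewrite (acoef_ne_1 j p) by lia; unfold acoef; simpl.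
    rewrite per_one_div.
    field; auto.
Qed.

(** Partial fractions on the cycles:
    [1 / ((u - u_i)(u - u_j)) = (1 / (u - u_i) - 1 / (u - u_j)) / (u_i - u_j)]. *)
Lemma is_derive_acoef_ne_1 i j : (2 <= i <= 2 * g + 1)%nat -> (2 <= j <= 2 * g + 1)%nat ->
  i <> j -> p i <> p j ->
  @is_derive C_AbsRing C_NormedModule (fun h => acoef g c gam dgam w i (shift p j h)) (RtoC 0)
    ((acoef g c gam dgam w j p - acoef g c gam dgam w i p) / (2 * (p j - p i)))%C.
Proof.
  intros Hi Hj Hij Hpij.
  assert (Dij := Cminus_neq_0 _ _ Hpij); assert (Dji := Cminus_neq_0 _ _ (not_eq_sym Hpij)).
  apply (is_derive_ext (fun h => per g c gam dgam w (fun _ => 1%C) (shift p j h)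
           + p i * per g c gam dgam w (fun z => / (z - p i))%C (shift p j h))%C).
  { intros h; rewrite acoef_ne_1, shift_other by lia; reflexivity. }
  replace ((acoef g c gam dgam w j p - acoef g c gam dgam w i p) / (2 * (p j - p i)))%C with
    (/ 2 * per g c gam dgam w (fun z => 1 / (z - p j)) p
     + p i * (/ 2 * per g c gam dgam w (fun z => / (z - p i) / (z - p j)) p))%C.
  - apply (@is_derive_plus C_AbsRing C_NormedModule);
      [|apply is_derive_C_scal]; apply is_derive_per;
      auto using along_cycles_const, along_cycles_inv_sub.
  - rewrite per_one_div.
    rewrite (per_ext_along (fun z => / (z - p i) / (z - p j))
               (fun z => / (p i - p j) * / (z - p i) + (- / (p i - p j)) * / (z - p j)))%C.
    + rewrite per_linear, !acoef_ne_1 by (auto using along_cycles_inv_sub; lia).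
      field; repeat split; auto; intro K; injection K; lra.
    + intros k t Hk Ht; field; repeat split; auto;
        apply (cycle_gam_sub_neq_0 (hcyc k Hk) p t); auto.
Qed.

Lemma acoef_sum :
  fold_right Cplus 0%C (map (fun i => acoef g c gam dgam w i p) (seq 1 (2 * g + 1))) = 0%C.
Proof.
  replace (2 * g + 1)%nat with (S (2 * g)) by lia.
  change (- P + Csum (idx g) (fun i => acoef g c gam dgam w i p) = 0)%C.
  rewrite (Csum_ext _ _ (fun i => P + p i * Q i)%C)
    by (intros i Hi; apply acoef_ne_1; apply in_idx in Hi; lia).
  rewrite !per_Csum.
  set (X := fun k => cyc_int (gam k) (dgam k) (w k) (fun _ => 1%C) p).
  set (Y := fun i k => cyc_int (gam k) (dgam k) (w k) (fun z => / (z - p i))%C p).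
  change (- Csum cycle_ids (fun k => c k * X k) + Csum (idx g) (fun i =>
    Csum cycle_ids (fun k => c k * X k) + p i * Csum cycle_ids (fun k => c k * Y i k)) = 0)%C.
  set (Z := fun k => (- X k + Csum (idx g) (fun i => X k + p i * Y i k))%C).
  assert (HZ : forall k, In k cycle_ids -> Z k = 0%C).
  { intros k Hk; exact (cycle_residue_sum (hcyc k (in_cycle_ids k Hk)) p hp). }
  transitivity (Csum cycle_ids (fun k => c k * Z k))%C;
    [|apply Csum_zero; intros k Hk; rewrite HZ; auto; ring].
  rewrite (Csum_ext cycle_ids (fun k => c k * Z k)%C (fun k => (-1) * (c k * X k)
             + Csum (idx g) (fun i => c k * X k + p i * (c k * Y i k)))%C).
  - rewrite (Csum_plus cycle_ids (fun k => -1 * (c k * X k))%C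
               (fun k => Csum (idx g) (fun i => c k * X k + p i * (c k * Y i k)))%C).
    rewrite (Csum_scal cycle_ids (-1) (fun k => c k * X k)%C), Csum_swap.
    rewrite (Csum_ext (idx g)
               (fun i => Csum cycle_ids (fun k => c k * X k + p i * (c k * Y i k)))%C
               (fun i => Csum cycle_ids (fun k => c k * X k)
               + p i * Csum cycle_ids (fun k => c k * Y i k))%C).
    + ring.
    + intros i _; rewrite Csum_plus, (Csum_scal _ (p i) (fun k => c k * Y i k)%C); reflexivity.
  - intros k _; unfold Z; rewrite Cmult_plus_distr_l, <- Csum_scal; f_equal; [ring|].
    apply Csum_ext; intros; ring.
Qed.

End Periods.

Lemma alpha_1 : alpha 1 = (/ 4)%C.
Proof. unfold alpha, Cinv, RtoC; simpl; f_equal; field. Qed.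

Lemma alpha_ne_1 j : j <> 1%nat -> alpha j = (- / 4)%C.
Proof.
  intros Hj; unfold alpha; apply Nat.eqb_neq in Hj; rewrite Hj.
  unfold Cinv, Copp, RtoC; simpl; f_equal; field.
Qed.

Theorem theorem2 (g : nat) (hg : (1 <= g)%nat)
  (U : (nat -> C) -> Prop) (hU : par_open g U) (hadm : forall p, U p -> admissible g p)
  (gam dgam : nat -> R -> C) (w : nat -> (nat -> C) -> R -> C)
  (hcyc : forall k, (k < 2 * g)%nat -> lifted_cycle g U (gam k) (dgam k) (w k))
  (c : nat -> C) (p : nat -> C) (hp : U p) :
  (forall i j, (1 <= i <= 2 * g + 1)%nat -> (2 <= j <= 2 * g + 1)%nat -> i <> j ->
     @is_derive C_AbsRing C_NormedModule
       (fun h => acoef g c gam dgam w i (shift p j h)) (RtoC 0)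
       (2 * (alpha j * acoef g c gam dgam w i p - alpha i * acoef g c gam dgam w j p)
          / (p j - ub p i))%C) /\
  fold_right Cplus 0%C (map (fun i => acoef g c gam dgam w i p) (seq 1 (2 * g + 1))) = 0%C.
Proof.
  split; [|exact (acoef_sum hcyc c p hp)].
  intros i j Hi Hj Hij; destruct (hadm p hp) as [Hnz Hdist].
  assert (Hpj : p j <> 0%C) by (apply Hnz; lia).
  rewrite (alpha_ne_1 j) by lia.
  destruct (Nat.eq_dec i 1) as [->|Hi1].
  - replace (2 * (- / 4 * acoef g c gam dgam w 1 p - alpha 1 * acoef g c gam dgam w j p)
               / (p j - ub p 1))%C
      with (- (acoef g c gam dgam w 1 p + acoef g c gam dgam w j p) / (2 * p j))%C.
    + apply (is_derive_acoef_1 hU hcyc c p hp); auto.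
    + rewrite alpha_1; unfold ub; simpl; field; auto.
  - assert (Hpij : p i <> p j) by (apply Hdist; auto; lia).
    replace (2 * (- / 4 * acoef g c gam dgam w i p - alpha i * acoef g c gam dgam w j p)
               / (p j - ub p i))%C
      with ((acoef g c gam dgam w j p - acoef g c gam dgam w i p) / (2 * (p j - p i)))%C.
    + apply (is_derive_acoef_ne_1 hU hcyc c p hp); auto; lia.
    + rewrite (alpha_ne_1 i) by auto; unfold ub; apply Nat.eqb_neq in Hi1; rewrite Hi1.
      assert (Dji := Cminus_neq_0 _ _ (not_eq_sym Hpij)).
      field; auto.
Qed.
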